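(* Let $G=(V,E)$ be an $n$-vertex graph with $E = M_1\cup\dots\cup M_t$, where $M_1,\dots,M_t$ are pairwise edge-disjoint matchings each of size at least $r$. For $i\in[t]$ let $G_i=(V,M_1\cup\dots\cup M_i)$ and let $d_i = |E(G_i)\cap V^2(M_i)|/|M_i|$. Then for every $\alpha\in(0,1)$, $$\sum_{i=1}^t \frac{1}{d_i} = O\!\left(\frac{1}{\alpha^2}\cdot \mathrm{ORS}_n\big((1-\alpha)r\big)\cdot \log n\right),$$ where the constant in $O(\cdot)$ is absolute.
   Context: For a matching $M$, $V(M)$ denotes the set of vertices matched by $M$, and $E(G_i)\cap V^2(M_i)$ is the set of edges of $G_i$ with both endpoints in $V(M_i)$. A sequence $M_1,\dots,M_t$ of pairwise edge-disjoint matchings is called ordered-induced if for every $i\in[t]$, $M_i$ is an induced matching of the graph with edge set $M_1\cup\dots\cup M_i$, i.e., no edge of $M_1\cup\cdots\cup M_{i-1}$ has both endpoints in $V(M_i)$. An $n$-vertex graph is an $\mathrm{ORS}_n(r,t)$ graph if its edge set is the union of an ordered-induced sequence of $t$ matchings, each of size exactly $r$. $\mathrm{ORS}_n(r)$ denotes the maximum $t$ for which an $\mathrm{ORS}_n(r,t)$ graph exists (for non-integer $r$, $r$ is replaced by $\lceil r\rceil$). *)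

From HB Require Import structures.
From mathcomp Require Import all_boot all_order all_algebra.
From mathcomp Require Import all_classical all_reals all_analysis.
Set Implicit Arguments. Unset Strict Implicit. Unset Printing Implicit Defensive.
Import Order.TTheory GRing.Theory Num.Theory.

Definition is_edge (n : nat) (e : {set 'I_n}) : bool := #|e| == 2.

Definition is_matching (n : nat) (M : {set {set 'I_n}}) : bool :=
  [forall e in M, is_edge e] &&
  [forall e in M, forall f in M, (e != f) ==> [disjoint e & f]].

Definition Vm (n : nat) (M : {set {set 'I_n}}) : {set 'I_n} :=
  \bigcup_(e in M) e.

(* Edge set of G_i = M_1 u ... u M_i (indices 0-based here). *)
Definition Eupto (n t : nat) (M : 'I_t -> {set {set 'I_n}}) (i : 'I_t)
  : {set {set 'I_n}} := \bigcup_(j : 'I_t | j <= i) M j.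

Definition induced_count (n t : nat) (M : 'I_t -> {set {set 'I_n}}) (i : 'I_t)
  : nat := #|[set e in Eupto M i | e \subset Vm (M i)]|.

Definition is_ORS (n r t : nat) : bool :=
  [exists M : {ffun 'I_t -> {set {set 'I_n}}},
    [&& [forall i : 'I_t, is_matching (M i) && (#|M i| == r)],
        [forall i : 'I_t, forall j : 'I_t, (i != j) ==> [disjoint M i & M j]] &
        [forall i : 'I_t, forall j : 'I_t, (j < i)%N ==>
            [forall e in M j, ~~ (e \subset Vm (M i))]]]].

(* ORS_n(r) = max t such that an ORS_n(r,t) graph exists.  For r >= 1 the
   matchings are nonempty and edge-disjoint, so t <= #edges <= 2^n, hence
   the maximum over t <= 2^n is the true maximum. *)
Definition ORS (n r : nat) : nat :=
  \max_(t < (2 ^ n).+1 | is_ORS n r t) t.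

Definition ORSr (R : realType) (n : nat) (x : R) : nat :=
  ORS n `|Num.ceil x|%N.

From HB Require Import structures.
From mathcomp Require Import all_boot all_order all_algebra zify.
Import Order.TTheory GRing.Theory Num.Theory.

Set Implicit Arguments.
Unset Strict Implicit.
Unset Printing Implicit Defensive.

(* Colour M_1, ..., M_t greedily in this order: M_i gets the least colour c such that
   the edges of earlier matchings of colour c spanned by V(M_i) number at most
   alpha |M_i| / 2.  Deleting from each M_i the edges that touch those earlier edges
   leaves at least (1 - alpha) r edges, and the pruned matchings of one colour form an
   ordered-induced sequence, so every colour class has at most ORS_n((1 - alpha) r)
   members.  Each colour below the colour c_i of M_i is blocked by more than
   alpha |M_i| / 2 edges, and the blocking sets are disjoint subsets of
   E(G_i) \cap V^2(M_i) \ M_i; hence c_i alpha <= 2 d_i <= 2 n^2.  Therefore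
   sum_i 1/d_i <= ORS_n((1 - alpha) r) * (1 + sum_(1 <= c <= 2 n^2 / alpha) 2 / (c alpha)),
   a harmonic sum of order log n / alpha^2. *)

Lemma subset_of_card (T : finType) (A : {set T}) k :
  k <= #|A| -> exists2 B : {set T}, B \subset A & #|B| = k.
Proof.
move=> leA; exists [set x in take k (enum A)].
  by apply/subsetP => x; rewrite inE => /mem_take; rewrite mem_enum.
by rewrite cardsE (card_uniqP _) ?take_uniq ?enum_uniq // size_takel -?cardE.
Qed.

Lemma card_bigcup_disjoint (T : finType) (F : nat -> {set T}) L :
  (forall a b, a != b -> [disjoint F a & F b]) ->
  #|\bigcup_(c < L) F c| = \sum_(c < L) #|F c|.
Proof.
move=> dF; elim: L => [|L IH]; first by rewrite !big_ord0 cards0.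
rewrite !big_ord_recr /= -IH cardsU.
suff /disjoint_setI0 -> : [disjoint \bigcup_(c < L) F c & F L] by rewrite cards0 subn0.
rewrite -setI_eq0 setIC setI_eq0.
apply: bigcup_disjoint => c _; rewrite disjoint_sym; apply: dF.
by rewrite neq_ltn ltn_ord.
Qed.

Lemma enum_val_ltn t (S : {set 'I_t}) (k k' : 'I_#|S|) :
  k' < k -> enum_val k' < enum_val k.
Proof.
move=> lt; have x0 := enum_val k; rewrite !(enum_val_nth x0).
have trans : transitive (relpre val ltn : rel 'I_t).
  by move=> y x z; exact: (@ltn_trans (val y)).
have sorted_enum : sorted (relpre val ltn) (enum S).
  rewrite /enum_mem -enumT; apply: sorted_filter => //.
  by rewrite -sorted_map val_enum_ord iota_ltn_sorted.
by apply: (sorted_ltn_nth trans x0 sorted_enum) lt; rewrite inE -cardE ltn_ord.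
Qed.

Section Matchings.
Variable n : nat.
Implicit Types (M N : {set {set 'I_n}}) (X e f : {set 'I_n}).

Lemma matching_edge_card M e : is_matching M -> e \in M -> #|e| = 2.
Proof. by case/andP => /forall_inP edges _ /edges/eqP. Qed.

Lemma matching_disjoint M e f :
  is_matching M -> e \in M -> f \in M -> e != f -> [disjoint e & f].
Proof. by case/andP => _ /forall_inP disj /disj/forall_inP sep /sep/implyP. Qed.

Lemma matchingS M N : N \subset M -> is_matching M -> is_matching N.
Proof.
move=> /subsetP sNM /andP[/forall_inP edges /forall_inP disj].
apply/andP; split; apply/forall_inP => e /sNM eM; first exact: edges.
by apply/forall_inP => f /sNM fM; move/forall_inP: (disj e eM); apply.
Qed.

Lemma sub_Vm M e : e \in M -> e \subset Vm M.
Proof. exact: bigcup_sup. Qed.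

Lemma VmS M N : N \subset M -> Vm N \subset Vm M.
Proof.
by move=> /subsetP sNM; apply/bigcupsP => e /sNM; exact: sub_Vm.
Qed.

Lemma card_Vm M : {in M, forall e, #|e| = 2} -> #|Vm M| <= 2 * #|M|.
Proof.
move=> edges; apply: leq_trans (leq_card_cover M) _.
by rewrite (eq_bigr _ edges) sum_nat_const mulnC.
Qed.

Lemma card_edges_meeting M X :
  is_matching M -> #|[set e in M | ~~ [disjoint e & X]]| <= #|X|.
Proof.
move=> matM; set Meet := [set e in M | _].
pose pt e := [pick x in e :&: X].
have pt_some e : e \in Meet -> exists2 x, pt e = Some x & x \in e :&: X.
  rewrite inE => /andP[_]; rewrite -setI_eq0 => /set0Pn[y yeX].
  by rewrite /pt; case: pickP => [x|none]; [exists x | rewrite none in yeX].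
have pt_inj : {in Meet &, injective pt}.
  move=> e f eMeet fMeet ptef; apply/eqP; apply: contraT => nef.
  have [x ptx /setIP[xe _]] := pt_some e eMeet.
  have [y pty /setIP[yf _]] := pt_some f fMeet.
  move: ptef; rewrite ptx pty => -[exy]; subst y.
  have [eM fM] : e \in M /\ f \in M by move: eMeet fMeet; rewrite !inE => /andP[-> _] /andP[].
  by rewrite (disjointFr (matching_disjoint matM eM fM nef) xe) in yf.
rewrite -(card_in_imset pt_inj) -(card_imset X (@Some_inj _)).
apply/subset_leq_card/subsetP => _ /imsetP[e eMeet ->].
by have [x -> /setIP[_ xX]] := pt_some e eMeet; apply: imset_f.
Qed.

Lemma card_edges : #|[set e : {set 'I_n} | #|e| == 2]| <= n ^ 2.
Proof.
rewrite card_draws card_ord bin2 leq_half_double; nia.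
Qed.

End Matchings.

Lemma card_set_ord n : #|{set 'I_n}| = 2 ^ n.
Proof. by rewrite -cardsT -powersetT card_powerset cardsT card_ord. Qed.

Lemma leq_ORS n r t : 0 < r -> is_ORS n r t -> t <= ORS n r.
Proof.
move=> r_gt0 ORSt.
suff t_small : t < (2 ^ n).+1.
  exact: (@leq_bigmax_cond _ (fun s : 'I_(2 ^ n).+1 => is_ORS n r s) val (Ordinal t_small)).
have /existsP[N /and3P[/forallP sizeN /forallP disjN _]] := ORSt.
pose pt k := odflt set0 [pick e in N k].
have ptN k : pt k \in N k.
  rewrite /pt; case: pickP => //= none; have /andP[_ /eqP cardN] := sizeN k.
  by move: r_gt0; rewrite -cardN; case/card_gt0P => e eN; move: (none e); rewrite /= eN.
have pt_inj : injective pt.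
  move=> k k' ptkk'; apply/eqP; apply: contraT => nekk'.
  have /forallP/(_ k')/implyP/(_ nekk') := disjN k.
  by move/disjointFr/(_ (ptN k)); rewrite ptkk' ptN.
by rewrite ltnS -card_set_ord -[t]card_ord; apply: leq_card pt_inj.
Qed.

Lemma is_ORS_subfamily n r t (N : 'I_t -> {set {set 'I_n}}) (S : {set 'I_t}) :
  {in S, forall i, is_matching (N i) /\ #|N i| = r} ->
  {in S &, forall i j, i != j -> [disjoint N i & N j]} ->
  {in S &, forall i j : 'I_t, j < i -> forall e, e \in N j -> ~~ (e \subset Vm (N i))} ->
  is_ORS n r #|S|.
Proof.
move=> sizeN disjN inducedN; apply/existsP; exists [ffun k => N (enum_val k)].
apply/and3P; split.
- apply/forallP => k; rewrite ffunE.
  by have [-> ->] := sizeN _ (enum_valP k); rewrite eqxx.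
- apply/forallP => k; apply/forallP => k'; apply/implyP => nekk'; rewrite !ffunE.
  by apply: disjN; rewrite ?enum_valP ?(inj_eq enum_val_inj).
- apply/forallP => k; apply/forallP => k'; apply/implyP => ltk'k; rewrite !ffunE.
  by apply/forall_inP; apply: inducedN; rewrite ?enum_valP ?enum_val_ltn.
Qed.

Lemma greedy_coloring t (P : ('I_t -> nat) -> nat -> 'I_t -> bool) :
  (forall col col' c (i : 'I_t), (forall j : 'I_t, j < i -> col j = col' j) ->
     P col c i = P col' c i) ->
  (forall col i, exists c, P col c i) ->
  exists col : 'I_t -> nat,
    forall i, P col (col i) i /\ forall c, c < col i -> ~~ P col c i.
Proof.
move=> causal P_ex.
pose greedy col i := P col (col i) i /\ forall c, c < col i -> ~~ P col c i.
suff /(_ t (leqnn t)) [col greedy_col] :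
    forall k, k <= t -> exists col, forall i : 'I_t, i < k -> greedy col i.
  by exists col => i; apply: greedy_col.
elim=> [|k IH] kt; first by exists (fun=> 0).
have [col greedy_col] := IH (ltnW kt); pose k' := Ordinal kt.
have [c0 c0P c0_min] := ex_minnP (P_ex col k').
pose col' j := if j == k' then c0 else col j.
have agree (i : 'I_t) : i <= k -> forall j : 'I_t, j < i -> col j = col' j.
  move=> ik j ji; rewrite /col'; case: eqP => // jk.
  by move: (leq_trans ji ik); rewrite jk ltnn.
exists col' => i; rewrite ltnS leq_eqVlt => /orP[/eqP ik | ik].
  have -> : i = k' by apply: val_inj.
  have agree_k' := agree k' (leqnn k).
  rewrite /greedy {2 3}/col' eqxx -!(causal col col') //; split=> // c.
  by rewrite -(causal col col') //; apply: contraTN => /c0_min; rewrite leqNgt.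
have ci : col' i = col i by rewrite /col'; case: eqP => // ik'; rewrite ik' ltnn in ik.
have [Pi Pi_min] := greedy_col i ik; have agree_i := agree i (ltnW ik).
rewrite /greedy ci -!(causal col col') //; split=> // c /Pi_min.
by rewrite -(causal col col').
Qed.

Section BackEdges.
Variables (n t : nat) (M : 'I_t -> {set {set 'I_n}}).
Hypothesis matM : forall i, is_matching (M i).
Hypothesis disjM : forall i j, i != j -> [disjoint M i & M j].
Implicit Types (i j : 'I_t) (S : {set 'I_t}) (col : 'I_t -> nat).

Definition back_edges (S : {set 'I_t}) (i : 'I_t) : {set {set 'I_n}} :=
  [set e in \bigcup_(j in S | j < i) M j | e \subset Vm (M i)].

Definition color_class (col : 'I_t -> nat) (c : nat) : {set 'I_t} :=
  [set j | col j == c].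

Lemma back_edges_prefix (S S' : {set 'I_t}) i :
  (forall j : 'I_t, j < i -> (j \in S) = (j \in S')) ->
  back_edges S i = back_edges S' i.
Proof.
move=> agree; rewrite /back_edges.
suff -> : \bigcup_(j in S | j < i) M j = \bigcup_(j in S' | j < i) M j by [].
apply: eq_bigl => j.
by case: (ltnP j i) => [/agree -> | _]; rewrite ?andbT ?andbF.
Qed.

Lemma back_edges_disjoint col i a b : a != b ->
  [disjoint back_edges (color_class col a) i & back_edges (color_class col b) i].
Proof.
move=> neab; rewrite -setI_eq0; apply/eqP/setP => e; rewrite !inE.
apply/negP => /andP[/andP[/bigcupP[j /andP[+ _] ej] _] /andP[/bigcupP[k /andP[+ _] ek] _]].
rewrite !inE => /eqP ja /eqP kb.
have nejk : j != k by apply: contraNneq neab => jk; rewrite -ja -kb jk.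
by rewrite (disjointFr (disjM nejk) ej) in ek.
Qed.

Lemma sum_back_edges_le_induced_count col i L :
  \sum_(c < L) #|back_edges (color_class col c) i| + #|M i| <= induced_count M i.
Proof.
rewrite -(@card_bigcup_disjoint _ (fun c => back_edges (color_class col c) i) L);
  last exact: back_edges_disjoint.
set U := \bigcup_(c < L) _.
have disjUM : [disjoint U & M i].
  rewrite -setI_eq0 setIC setI_eq0; apply: bigcup_disjoint => c _.
  rewrite -setI_eq0; apply/eqP/setP => e; rewrite !inE.
  apply/negP => /andP[ei /andP[/bigcupP[j /andP[_ ji] ej] _]].
  have neji : j != i by rewrite neq_ltn ji.
  by rewrite (disjointFr (disjM neji) ej) in ei.
have card_UM : #|U :|: M i| = #|U| + #|M i|.
  by apply/eqP; rewrite (leq_card_setU U (M i)).2.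
rewrite -card_UM /induced_count; apply/subset_leq_card/subsetP => e.
rewrite !inE => /orP[/bigcupP[c _] | ei].
  rewrite inE => /andP[/bigcupP[j /andP[_ ji] ej] ->]; rewrite andbT.
  by apply/bigcupP; exists j => //; exact: ltnW.
by rewrite sub_Vm // andbT; apply/bigcupP; exists i.
Qed.

Lemma card_le_induced_count i : #|M i| <= induced_count M i.
Proof. by have := sum_back_edges_le_induced_count (fun=> 0) i 0; rewrite big_ord0. Qed.

Lemma induced_count_le i : induced_count M i <= n ^ 2.
Proof.
apply: leq_trans (card_edges n); apply/subset_leq_card/subsetP => e.
by rewrite !inE => /andP[/bigcupP[j _ ej] _]; rewrite (matching_edge_card (matM j) ej).
Qed.

Definition pruned (S : {set 'I_t}) (i : 'I_t) : {set {set 'I_n}} :=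
  [set e in M i | [disjoint e & Vm (back_edges S i)]].

Lemma pruned_subset S i : pruned S i \subset M i.
Proof. by apply/subsetP => e; rewrite inE => /andP[]. Qed.

Lemma card_pruned S i : #|M i| <= #|pruned S i| + 2 * #|back_edges S i|.
Proof.
set unhit := [set e : {set 'I_n} | [disjoint e & Vm (back_edges S i)]].
have -> : #|pruned S i| = #|M i :&: unhit| by apply: eq_card => e; rewrite !inE.
rewrite -{1}(cardsID unhit (M i)) leq_add2l.
apply: leq_trans (card_Vm _); last first.
  move=> e; rewrite inE => /andP[/bigcupP[j _ ej] _]; exact: matching_edge_card (matM j) ej.
apply: leq_trans (card_edges_meeting _ (matM i)).
by apply/subset_leq_card/subsetP => e; rewrite !inE => /andP[-> ->].
Qed.

Lemma pruned_induced S i j e : j \in S -> j < i -> e \in M j ->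
  ~~ (e \subset Vm (pruned S i)).
Proof.
move=> jS ji ej; apply/negP => sub_e.
have e_back : e \in back_edges S i.
  rewrite inE (subset_trans sub_e (VmS (pruned_subset S i))) andbT.
  by apply/bigcupP; exists j; rewrite ?jS.
have /card_gt0P[x xe] : 0 < #|e| by rewrite (matching_edge_card (matM j) ej).
have /bigcupP[f] := subsetP sub_e x xe; rewrite inE => /andP[_ f_disj] xf.
by have := subsetP (sub_Vm e_back) x xe; rewrite (disjointFr f_disj xf).
Qed.

Lemma card_class_le_ORS S r : 0 < r ->
  {in S, forall i, 2 * #|back_edges S i| + r <= #|M i|} -> #|S| <= ORS n r.
Proof.
move=> r_gt0 sparse; apply: leq_ORS => //.
have [N subN] : exists N : 'I_t -> {set {set 'I_n}},
    forall i, i \in S -> N i \subset pruned S i /\ #|N i| = r.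
  apply: (@fin_all_exists _ (fun=> {set {set 'I_n}})
    (fun i N => i \in S -> N \subset pruned S i /\ #|N| = r)) => i.
  case: (boolP (i \in S)) => [iS | _]; last by exists set0.
  have [|N sub_N cardN] := @subset_of_card _ (pruned S i) r; last by exists N.
  by have := card_pruned S i; have := sparse i iS; lia.
have subM i : i \in S -> N i \subset M i.
  by move=> /subN[/subset_trans sub _]; apply/sub/pruned_subset.
apply: is_ORS_subfamily.
- by move=> i iS; split; [exact: matchingS (subM i iS) (matM i) | case: (subN i iS)].
- move=> i j iS jS neij.
  exact: disjointWl (subM i iS) (disjointWr (subM j jS) (disjM neij)).
- move=> i j iS jS ji e eNj; apply: contra (pruned_induced jS ji (subsetP (subM j jS) e eNj)).
  by move/subset_trans; apply; apply: VmS; case: (subN i iS).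
Qed.

End BackEdges.

From mathcomp Require Import all_classical all_reals all_analysis ring lra.
Local Open Scope ring_scope.

Section SparseColoring.
Variables (R : realType) (n t : nat) (M : 'I_t -> {set {set 'I_n}}).
Hypothesis matM : forall i, is_matching (M i).
Hypothesis disjM : forall i j, i != j -> [disjoint M i & M j].
Variable alpha : R.
Implicit Types (i : 'I_t) (col : 'I_t -> nat) (c : nat).

Definition density i : R := (induced_count M i)%:R / #|M i|%:R.

Definition sparse_color col c i : bool :=
  (2 * #|back_edges M (color_class col c) i|)%:R <= alpha * #|M i|%:R.

Lemma greedy_sparse_coloring : 0 < alpha ->
  exists col, forall i, sparse_color col (col i) i /\
                        forall c, (c < col i)%N -> ~~ sparse_color col c i.
Proof.
move=> alpha_gt0; apply: greedy_coloring => [col col' c i agree | col i].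
  by rewrite /sparse_color (@back_edges_prefix _ _ _ _ (color_class col' c)) // => j /agree;
    rewrite !inE => ->.
pose m := (\max_(j : 'I_t) col j)%N; exists m.+1; rewrite /sparse_color.
suff -> : back_edges M (color_class col m.+1) i = finset.set0.
  by rewrite cards0 muln0 mulr_ge0 // ltW.
apply/setP => e; rewrite !inE; apply/negP => /andP[/bigcupP[j /andP[+ _] _] _].
by rewrite inE => /eqP col_j; have := leq_bigmax j (F := col); rewrite col_j ltnn.
Qed.

Lemma color_le_density col i : (0 < #|M i|)%N ->
  (forall c, (c < col i)%N -> ~~ sparse_color col c i) ->
  (col i)%:R * alpha <= 2 * density i.
Proof.
move=> Mi_gt0 dense.
have sum_dense : \sum_(c < col i) (alpha * #|M i|%:R) <=
    \sum_(c < col i) (2 * #|back_edges M (color_class col c) i|)%N%:R.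
  by apply: ler_sum => c _; rewrite ltW // ltNge dense.
rewrite sumr_const card_ord -mulr_natl -natr_sum -big_distrr natrM /= in sum_dense.
have := sum_back_edges_le_induced_count disjM col i (col i).
rewrite -(ler_nat R) natrD => bound.
have Mi_pos : (0 : R) < #|M i|%:R by rewrite ltr0n.
rewrite /density mulrA ler_pdivlMr //; lra.
Qed.

Lemma density_ge1 i : (0 < #|M i|)%N -> 1 <= density i.
Proof.
by move=> Mi_gt0; rewrite ler_pdivlMr ?ltr0n // mul1r ler_nat card_le_induced_count.
Qed.

Lemma density_le i : (0 < #|M i|)%N -> density i <= n%:R ^+ 2.
Proof.
move=> Mi_gt0; rewrite ler_pdivrMr ?ltr0n // -natrX -natrM ler_nat.
by apply: leq_trans (induced_count_le matM i) _; rewrite leq_pmulr.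
Qed.

Lemma color_le_sq_div col i : 0 < alpha -> (0 < #|M i|)%N ->
  (forall c, (c < col i)%N -> ~~ sparse_color col c i) ->
  (col i)%:R <= 2 * n%:R ^+ 2 / alpha.
Proof.
move=> alpha_gt0 Mi_gt0 dense; rewrite ler_pdivlMr //.
apply: le_trans (color_le_density Mi_gt0 dense) _.
by apply: ler_wpM2l => //; apply: density_le.
Qed.

Lemma card_color_class_le_ORSr col r c : 0 < alpha < 1 -> (1 <= r)%N ->
  (forall i, r <= #|M i|)%N -> (forall i, sparse_color col (col i) i) ->
  (#|color_class col c| <= ORSr n ((1 - alpha) * r%:R))%N.
Proof.
move=> /andP[alpha_gt0 alpha_lt1] r_gt0 r_le sparse.
set x := (1 - alpha) * r%:R.
have x_gt0 : 0 < x by apply: mulr_gt0; [lra | rewrite ltr0n].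
have ceil_x : `|Num.ceil x|%N%:Z = Num.ceil x by rewrite gez0_abs // ltW // ceil_gt0.
apply: card_class_le_ORS => //; first by rewrite -ltz_nat ceil_x ceil_gt0.
move=> i; rewrite inE => /eqP col_i; have := sparse i; rewrite /sparse_color col_i.
set B := #|back_edges _ _ _| => sparse_i.
have Mi_r : (r%:R : R) <= #|M i|%:R by rewrite ler_nat.
have B_le : (2 * B <= #|M i|)%N.
  by rewrite -(ler_nat R); apply: le_trans sparse_i _; rewrite ler_piMl ?ler0n // ltW.
suff : (`|Num.ceil x|%N <= #|M i| - 2 * B)%N by lia.
rewrite -lez_nat ceil_x ceil_le_int -[(_%:Z)%:~R]/(_%:R) natrB //.
have : 0 <= (1 - alpha) * (#|M i|%:R - r%:R) by apply: mulr_ge0; lra.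
rewrite natrM /x; lra.
Qed.

End SparseColoring.

Section ColorWeights.
Variable R : realType.
Implicit Types (alpha d : R) (c m : nat).

Lemma sum_by_class t (F : nat -> R) (col : 'I_t -> nat) K m :
  (forall c, 0 <= F c) -> (forall c, #|color_class col c| <= K)%N ->
  (forall i, col i <= m)%N ->
  \sum_i F (col i) <= K%:R * \sum_(c < m.+1) F c.
Proof.
move=> F_ge0 class_le col_le.
rewrite (partition_big (fun i => inord (col i) : 'I_m.+1) xpredT) //= mulr_sumr.
apply: ler_sum => c _; rewrite (eq_bigr (fun=> F c)) => [|i /eqP <-]; last first.
  by rewrite inordK // ltnS.
rewrite sumr_const -[F c *+ _]mulr_natl; apply: ler_wpM2r => //.
rewrite ler_nat; apply: leq_trans (class_le c).
suff -> : #|[pred i | inord (col i) == c]| = #|color_class col c| by [].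
by apply: eq_card => i; rewrite !inE -val_eqE /= inordK // ltnS.
Qed.

(* Bound on 1 / d_i for a matching of colour c: d_i >= 1, and d_i >= c alpha / 2 by
   [color_le_density]. *)
Definition color_weight alpha c : R := if c is 0 then 1 else 2 / (c%:R * alpha).

Lemma color_weight_ge0 alpha c : 0 < alpha -> 0 <= color_weight alpha c.
Proof. by move=> alpha_gt0; case: c => [|c] //=; rewrite divr_ge0 // ltW // mulr_gt0. Qed.

Lemma inv_le_color_weight alpha d c : 0 < alpha -> 1 <= d ->
  c%:R * alpha <= 2 * d -> d^-1 <= color_weight alpha c.
Proof.
move=> alpha_gt0 d_ge1; case: c => [|c] /= c_le; first by rewrite invf_le1 //; lra.
have c_alpha_gt0 : 0 < c.+1%:R * alpha by rewrite mulr_gt0.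
by rewrite -(invf_div (c.+1%:R * alpha) 2) lef_pV2 ?posrE ?ler_pdivrMl //; lra.
Qed.

Lemma ln_nat_ge0 m : 0 <= ln (m%:R : R).
Proof. by case: m => [|m]; [rewrite ln0 | apply: ln_ge0; rewrite ler1n]. Qed.

Lemma harmonic_le_ln m : (0 < m)%N -> \sum_(c < m) (c.+1)%:R^-1 <= 1 + ln (m%:R : R).
Proof.
elim: m => // [[|m]] IH _; first by rewrite big_ord_recr big_ord0 /= add0r ln1 addr0 invr1.
rewrite big_ord_recr /=; have {}IH := IH isT.
set a : R := m.+1%:R; have -> : m.+2%:R = a + 1 :> R by rewrite /a -natr1.
have a_gt0 : 0 < a by rewrite ltr0n.
suff : (a + 1)^-1 <= ln (a + 1) - ln a by lra.
have a_eq : a = (a + 1) * (1 - (a + 1)^-1) by field; lra.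
have inv_lt1 : (a + 1)^-1 < 1 by rewrite invf_lt1; lra.
have ln_a : ln a = ln (a + 1) + ln (1 - (a + 1)^-1).
  by rewrite -lnM ?posrE -?a_eq; lra.
have : ln (1 - (a + 1)^-1) <= - (a + 1)^-1 by apply: le_ln1Dx; lra.
lra.
Qed.

Lemma sum_color_weight_le alpha m (N : R) : 0 < alpha -> 1 <= N -> m%:R <= N ->
  \sum_(c < m.+1) color_weight alpha c <= 1 + 2 / alpha * (1 + ln N).
Proof.
move=> alpha_gt0 N_ge1 m_le; rewrite big_ord_recl /=.
have -> : \sum_(c < m) color_weight alpha (lift ord0 c) =
    2 / alpha * \sum_(c < m) (c.+1)%:R^-1.
  by rewrite mulr_sumr; apply: eq_bigr => c _; rewrite lift0 /= invfM; ring.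
rewrite lerD2l; apply: ler_wpM2l; first by rewrite divr_ge0 // ltW.
have [-> | m_gt0] := posnP m; first by rewrite big_ord0; have := ln_ge0 N_ge1; lra.
apply: le_trans (harmonic_le_ln m_gt0) _; rewrite lerD2l ler_ln ?posrE ?ltr0n //.
lra.
Qed.

End ColorWeights.

Lemma color_weight_bound_le_ln (R : realType) (n : nat) (alpha : R) :
  (2 <= n)%N -> 0 < alpha < 1 ->
  1 + 2 / alpha * (1 + ln (2 * n%:R ^+ 2 / alpha)) <= 11 / ln 2 / alpha ^+ 2 * ln n%:R.
Proof.
move=> n_ge2 /andP[alpha_gt0 alpha_lt1].
have nR_ge2 : (2 : R) <= n%:R by rewrite ler_nat.
have ln2_gt0 : (0 : R) < ln 2 by apply: ln_gt0; lra.
have ln2_le1 : ln (2 : R) <= 1 by rewrite -[2]/(1 + 1 : R) le_ln1Dx //; lra.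
have ln2_le : ln (2 : R) <= ln n%:R by rewrite ler_ln ?posrE //; lra.
rewrite -exprVn; set a := alpha^-1; have a_ge1 : 1 <= a by rewrite invf_ge1 //; lra.
have ln_arg : ln (2 * n%:R ^+ 2 * a) <= 3 * ln n%:R + a.
  have ln_a : ln a <= a - 1.
    by have := @le_ln1Dx R (a - 1); rewrite addrCA subrr addr0; apply; lra.
  have n3 : 2 * n%:R ^+ 2 * a <= n%:R ^+ 3 * a.
    by apply: ler_wpM2r; [lra | rewrite exprS; apply: ler_wpM2r].
  have n3_pos : 0 < n%:R ^+ 3 * a :> R by rewrite mulr_gt0 ?exprn_gt0; lra.
  apply: le_trans (_ : ln (n%:R ^+ 3 * a) <= _).
    by rewrite ler_ln ?posrE // mulr_gt0 ?mulr_gt0 ?exprn_gt0; lra.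
  by rewrite lnM ?posrE ?exprn_gt0 ?lnXn; lra.
have ln_n_ge0 : 0 <= ln n%:R :> R by lra.
apply: le_trans (_ : _ <= 1 + 2 * a * (1 + 3 * ln n%:R + a)) _.
  by rewrite lerD2l; apply: ler_wpM2l; lra.
(* With a >= 1 and ln 2 <= min (1, ln n), each of 1, a, a^2 and a ln n is at most
   a^2 ln n / ln 2; the left side is at most 1 + 2a + 6 a ln n + 2 a^2, whence 11 / ln 2. *)
move: ln_arg ln2_gt0 ln2_le1 ln2_le ln_n_ge0; clearbody a.
move: (ln n%:R) (ln (2 : R)) => l lam _ lam_gt0 lam_le1 lam_le l_ge0.
have -> : 11 / lam * a ^+ 2 * l = 11 * a ^+ 2 * l / lam by ring.
have h1 : 0 <= (a ^+ 2 - 1) * l by apply: mulr_ge0 => //; rewrite subr_ge0 expr2; nra.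
have h2 : 0 <= a * (l - lam) by apply: mulr_ge0; lra.
have h3 : 0 <= (a ^+ 2 - a) * l by apply: mulr_ge0 => //; rewrite subr_ge0 expr2; nra.
have h4 : 0 <= a * l * (1 - lam) by apply: mulr_ge0; [apply: mulr_ge0 | ]; lra.
have h5 : 0 <= a ^+ 2 * (l - lam) by apply: mulr_ge0; [apply: exprn_ge0 | ]; lra.
rewrite ler_pdivlMr //; lra.
Qed.

Theorem lemma4p5 (R : realType) :
  exists C : R, 0 < C /\
  forall (n t r : nat) (M : 'I_t -> {set {set 'I_n}}),
    (1 <= r)%N ->
    (forall i, is_matching (M i)) ->
    (forall i, (r <= #|M i|)%N) ->
    (forall i j, i != j -> [disjoint M i & M j]) ->
    forall alpha : R, 0 < alpha < 1 ->
      \sum_(i < t) ((induced_count M i)%:R / (#|M i|)%:R)^-1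
        <= C / alpha ^+ 2 * (ORSr n ((1 - alpha) * r%:R))%:R * ln (n%:R).
Proof.
have ln2_gt0 : (0 : R) < ln 2 by apply: ln_gt0; lra.
exists (11 / ln 2); split; first by rewrite divr_gt0.
move=> n [|t] r M r_ge1 matM r_le disjM alpha alpha01;
  have [alpha_gt0 alpha_lt1] := andP alpha01.
  by rewrite big_ord0 mulr_ge0 ?ln_nat_ge0 // mulr_ge0 ?ler0n // !divr_ge0 ?exprn_ge0 ?ltW.
have Mi_gt0 i : (0 < #|M i|)%N := leq_trans r_ge1 (r_le i).
have n_ge2 : (2 <= n)%N.
  have /card_gt0P[e e_in] := Mi_gt0 ord0.
  by rewrite -(matching_edge_card (matM ord0) e_in) -[X in (_ <= X)%N](card_ord n) max_card.
have [col colP] := greedy_sparse_coloring M alpha_gt0.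
pose m := (\max_i col i)%N.
have m_le : m%:R <= 2 * n%:R ^+ 2 / alpha.
  rewrite /m; have [i0 ->] := bigop.eq_bigmax col (ltac:(by rewrite card_ord)).
  exact (color_le_sq_div matM disjM alpha_gt0 (Mi_gt0 i0) (colP i0).2).
apply: le_trans (_ : _ <= \sum_i color_weight alpha (col i)) _.
  apply: ler_sum => i _.
  apply: inv_le_color_weight alpha_gt0 (density_ge1 R disjM (Mi_gt0 i)) _.
  exact (color_le_density disjM (Mi_gt0 i) (colP i).2).
apply: le_trans (sum_by_class (m := m) (K := ORSr n ((1 - alpha) * r%:R)) _ _ _) _.
- by move=> c; apply: color_weight_ge0.
- by move=> c; apply: card_color_class_le_ORSr => // i; case: (colP i).
- by move=> i; apply: leq_bigmax.
rewrite mulrAC mulrC; apply: ler_wpM2r => //.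
apply: le_trans (color_weight_bound_le_ln n_ge2 alpha01); apply: sum_color_weight_le => //.
rewrite ler_pdivlMr // mul1r (le_trans (ltW alpha_lt1)) // -natrX -natrM ler1n.
by rewrite muln_gt0 expn_gt0 (ltnW n_ge2).
Qed.
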